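(* Let $\mathbf{x}=(x_1,\dots,x_n)$, and let $u(\mathbf{x},g(\mathbf{x}))$ be a multivariate constrained expression built by recursively substituting univariate constrained expressions ${}^{k}u(\mathbf{x},g)=g+\sum_j {}^{k}\phi_j(x_k)\,{}^{k}\rho_j(\mathbf{x},g)$, $k=1,\dots,n$, into one another (each used once, the innermost using the free function $g$). Then for any function $f:\mathbb{R}^n\to\mathbb{R}$ satisfying all the constraints there exists at least one free function $g$ such that $u(\mathbf{x},g(\mathbf{x}))=f(\mathbf{x})$. In other words, multivariate constrained expressions are surjective functionals from the set of all free functions to the set of all functions satisfying the constraints.
   Context: For each $k$ there are linear constraints ${}^{k}\mathcal{C}_j[u]={}^{k}\kappa_j$, $j=1,\dots,\ell_k$, where ${}^{k}\mathcal{C}_j$ is a linear operator associated with the $k$-th independent variable returning the operand function evaluated in the way the dependent variable appears in that constraint, and ${}^{k}\kappa_j$ does not depend on $x_k$. The projection functionals are ${}^{k}\rho_j(\mathbf{x},g)={}^{k}\kappa_j-{}^{k}\mathcal{C}_j[g]$ and the switching functions ${}^{k}\phi_j(x_k)$ are linear combinations of support functions in $x_k$ satisfying ${}^{k}\mathcal{C}_i[{}^{k}\phi_j]=\delta_{ij}$. A free function is any $g:\mathbb{R}^n\to\mathbb{R}$ for which all constraint operators (and compositions with at most one operator per variable) appearing in the construction are defined. A function $f$ satisfies the constraints if ${}^{k}\mathcal{C}_j[f]={}^{k}\kappa_j$ for all $k,j$. *)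

From mathcomp Require Import all_boot all_order all_algebra all_fingroup.
From mathcomp Require Import reals.
Set Implicit Arguments. Unset Strict Implicit. Unset Printing Implicit Defensive.
Import Order.TTheory GRing.Theory Num.Theory.
Local Open Scope ring_scope.

(* Points of R^n are row vectors 'rV[R]_n; coordinate k of x is x 0 k. *)

Definition cop (R : realType) (n : nat) (ell : 'I_n -> nat) :=
  forall k : 'I_n, 'I_(ell k) -> ('rV[R]_n -> R) -> ('rV[R]_n -> R).

Definition ucx (R : realType) (n : nat) (ell : 'I_n -> nat) (C : cop R ell)
  (kappa : forall k : 'I_n, 'I_(ell k) -> 'rV[R]_n -> R)
  (phi : forall k : 'I_n, 'I_(ell k) -> R -> R)
  (k : 'I_n) (g : 'rV[R]_n -> R) : 'rV[R]_n -> R :=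
  fun x => g x + \sum_(j < ell k) phi k j (x 0 k) * (kappa k j x - C k j g x).

(* Multivariate constrained expression obtained by recursive substitution in
   the order given by the permutation s:
   u = u_{s 0}( u_{s 1}( ... u_{s (n-1)}(g) ... )). *)
Definition mcx (R : realType) (n : nat) (ell : 'I_n -> nat) (C : cop R ell)
  (kappa : forall k : 'I_n, 'I_(ell k) -> 'rV[R]_n -> R)
  (phi : forall k : 'I_n, 'I_(ell k) -> R -> R)
  (s : 'S_n) (g : 'rV[R]_n -> R) : 'rV[R]_n -> R :=
  foldr (fun i h => ucx C kappa phi (s i) h) g (enum 'I_n).

Definition linear_op (R : realType) (n : nat)
  (L : ('rV[R]_n -> R) -> ('rV[R]_n -> R)) : Prop :=
  forall (a : R) (f g : 'rV[R]_n -> R),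
    L (fun x => f x + a * g x) = (fun x => L f x + a * L g x).

Definition indep_of (R : realType) (n : nat) (k : 'I_n) (h : 'rV[R]_n -> R) : Prop :=
  forall x y : 'rV[R]_n, (forall i, i != k -> x 0 i = y 0 i) -> h x = h y.

From mathcomp Require Import all_boot all_order all_algebra all_fingroup.
From mathcomp Require Import reals.
From Stdlib Require Import FunctionalExtensionality.
Import Order.TTheory GRing.Theory Num.Theory.
Local Open Scope ring_scope.

Section ConstrainedExpressionFixpoints.

Variables (R : realType) (n : nat) (ell : 'I_n -> nat) (C : cop R ell).
Variable kappa : forall k : 'I_n, 'I_(ell k) -> 'rV[R]_n -> R.
Variable phi : forall k : 'I_n, 'I_(ell k) -> R -> R.

Lemma ucx_constrained (k : 'I_n) (f : 'rV[R]_n -> R) :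
  (forall j, C k j f = kappa k j) -> ucx C kappa phi k f = f.
Proof.
move=> Cf; apply: functional_extensionality => x; rewrite /ucx.
by rewrite big1 ?addr0 // => j _; rewrite Cf subrr mulr0.
Qed.

Lemma mcx_constrained (s : 'S_n) (f : 'rV[R]_n -> R) :
  (forall k j, C k j f = kappa k j) -> mcx C kappa phi s f = f.
Proof.
move=> Cf; rewrite /mcx.
by elim: (enum 'I_n) => //= i r ->; apply: ucx_constrained.
Qed.

End ConstrainedExpressionFixpoints.

Theorem theorem7 (R : realType) (n : nat) (ell : 'I_n -> nat) (C : cop R ell)
  (kappa : forall k : 'I_n, 'I_(ell k) -> 'rV[R]_n -> R)
  (phi : forall k : 'I_n, 'I_(ell k) -> R -> R) :
  (forall k j, linear_op (C k j)) ->
  (forall k j, indep_of k (kappa k j)) ->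
  (forall k (i j : 'I_(ell k)),
     C k i (fun x => phi k j (x 0 k)) = (fun _ => if i == j then 1 else 0)) ->
  forall (s : 'S_n) (f : 'rV[R]_n -> R),
    (forall k j, C k j f = kappa k j) ->
    exists g : 'rV[R]_n -> R, mcx C kappa phi s g = f.
Proof.
(* The witness g := f needs none of the structural hypotheses: every
   projection functional vanishes on a function satisfying the constraints. *)
move=> _ _ _ s f Cf.
by exists f; apply: mcx_constrained.
Qed.
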